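(* Let $c\in\mathbb{C}$ and let $\mathbf{u},\widehat{\mathbf{u}}$ be quasi-definite linear functionals with $\mathbf{u}=(x-c)^2\widehat{\mathbf{u}}$, SMOPs $(P_n)$ and $(Q_n)$, and monic Jacobi matrices $J$ and $\widehat J$. Write $Q_n=P_n+\alpha_{n,n-1}P_{n-1}+\alpha_{n,n-2}P_{n-2}$ ($n\ge1$, with $P_{-1}=0$) and $(x-c)^2P_n=Q_{n+2}+\beta_{n,n+1}Q_{n+1}+\beta_{n,n}Q_n$ ($n\ge0$). Then $W(Q_{n+1},Q_n)(c)\ne0$ for all $n\ge0$, $$\beta_{n,n}=\frac{W(Q_{n+1},Q_{n+2})(c)}{W(Q_n,Q_{n+1})(c)}\neq0,\qquad \beta_{n,n+1}=-\frac{W(Q_n,Q_{n+2})(c)}{W(Q_n,Q_{n+1})(c)},$$ and, with $L$ the semi-infinite lower triangular matrix with $L_{n,n}=1$, $L_{n,n-1}=\alpha_{n,n-1}$, $L_{n,n-2}=\alpha_{n,n-2}$ and all other entries $0$, and $U$ the semi-infinite upper triangular matrix with $U_{n,n}=\beta_{n,n}$, $U_{n,n+1}=\beta_{n,n+1}$, $U_{n,n+2}=1$ and all other entries $0$, $$(J-cI)^2=UL,\qquad (\widehat J-cI)^2=LU.$$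
   Context: Quasi-definite functional: all leading principal submatrices of the Hankel moment matrix are nonsingular; it has a unique sequence of monic orthogonal polynomials (SMOP) $(P_n)$ with $xP_n=P_{n+1}+b_nP_n+a_nP_{n-1}$, $P_{-1}=0$, $P_0=1$, $a_n\ne0$. The monic Jacobi matrix is the semi-infinite tridiagonal matrix with diagonal $(b_0,b_1,\dots)$, superdiagonal entries $1$ and subdiagonal $(a_1,a_2,\dots)$, so that $x\mathbf{P}=J\mathbf{P}$ for $\mathbf{P}=(P_0,P_1,\dots)^\top$. $\langle(x-c)^2\widehat{\mathbf{u}},p\rangle=\langle\widehat{\mathbf{u}},(x-c)^2p\rangle$. Wronskian: $W(p,q)(x)=p(x)q'(x)-p'(x)q(x)$. *)

From HB Require Import structures.
From mathcomp Require Import all_boot all_order all_algebra.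
From mathcomp Require Import reals complex.
Set Implicit Arguments. Unset Strict Implicit. Unset Printing Implicit Defensive.
Import GRing.Theory Num.Theory.
Local Open Scope ring_scope.

Definition lin_functional (K : fieldType) (u : {poly K} -> K) : Prop :=
  forall (a : K) (p q : {poly K}), u (a *: p + q) = a * u p + u q.

Definition quasi_definite (K : fieldType) (u : {poly K} -> K) : Prop :=
  forall n : nat, \det (\matrix_(i < n.+1, j < n.+1) u 'X^(i + j)) != 0.

Definition is_SMOP (K : fieldType) (u : {poly K} -> K) (P : nat -> {poly K}) : Prop :=
  (forall n, P n \is monic) /\ (forall n, size (P n) = n.+1) /\
  (forall m n, m != n -> u (P m * P n) = 0) /\ (forall n, u (P n * P n) != 0).

Definition smat (K : Type) := nat -> nat -> K.

Definition monic_jacobi (K : fieldType) (P : nat -> {poly K}) (J : smat K) : Prop :=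
  exists (a b : nat -> K),
    (forall n, 'X * P n = P n.+1 + b n *: P n
                          + (if n is m.+1 then a n *: P m else 0)) /\
    (forall i j, J i j = if j == i.+1 then 1
                         else if j == i then b i
                         else if i == j.+1 then a i else 0).

Definition smat_subc (K : fieldType) (A : smat K) (c : K) : smat K :=
  fun i j => A i j - (if i == j then c else 0).

(* M is the product A B of semi-infinite matrices: for every entry, the
   partial sums of sum_k A_{ik} B_{kj} are eventually constant equal to M_{ij}
   (i.e. the sum has finitely many nonzero terms and equals M_{ij}). *)
Definition smat_prod (K : fieldType) (A B M : smat K) : Prop :=
  forall i j, exists N : nat, forall N' : nat, (N <= N')%N ->
    \sum_(k < N') A i k * B k j = M i j.

Definition wronskian (K : fieldType) (p q : {poly K}) : {poly K} :=
  p * q^`() - p^`() * q.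

Definition Lmat (K : fieldType) (al1 al2 : nat -> K) : smat K :=
  fun i j => if i == j then 1
             else if i == j.+1 then al1 i
             else if i == j.+2 then al2 i else 0.

Definition Umat (K : fieldType) (be0 be1 : nat -> K) : smat K :=
  fun i j => if j == i then be0 i
             else if j == i.+1 then be1 i
             else if j == i.+2 then 1 else 0.

From HB Require Import structures.
From mathcomp Require Import all_boot all_order all_algebra.
From mathcomp Require Import reals complex.
From mathcomp Require Import zify ring.
Set Implicit Arguments. Unset Strict Implicit. Unset Printing Implicit Defensive.
Import GRing.Theory Num.Theory.
Local Open Scope ring_scope.

(* Evaluating (x - c)^2 P_n = Q_(n+2) + ... and
      its derivative at c then yields beta_(n,n), beta_(n,n+1) by Cramer's rule.
   3. A banded matrix A whose rows express T_i in a family (W_k) ("expands")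
      composes with such matrices, and expansions in a basis are unique.  Both
      (J - cI)^2 and UL express (x - c)^2 P_i in the basis (P_k), and both
      (Jh - cI)^2 and LU express (x - c)^2 Q_i in (Q_k), so the products agree. *)

Lemma sum_trunc (M : zmodType) (F : nat -> M) m N : (m <= N)%N ->
  (forall k, (m <= k)%N -> F k = 0) -> \sum_(k < N) F k = \sum_(k < m) F k.
Proof.
move=> le_mN F0; rewrite -(subnKC le_mN) big_split_ord /=.
by rewrite [X in _ + X]big1 ?addr0 // => k _; rewrite F0 // leq_addr.
Qed.

Section DegreeBasis.
Variables (K : fieldType) (V : nat -> {poly K}).
Hypothesis V_size : forall k, size (V k) = k.+1.

Lemma size_combination (f : nat -> K) N :
  (size (\sum_(k < N) f k *: V k)%R <= N)%N.
Proof.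
elim: N => [|N IH]; first by rewrite big_ord0 size_poly0.
rewrite big_ord_recr /=; apply: leq_trans (size_polyD _ _) _.
by rewrite geq_max (leq_trans IH) //= (leq_trans (size_scale_leq _ _)) ?V_size.
Qed.

Lemma combination_eq0 (f : nat -> K) N :
  \sum_(k < N) f k *: V k = 0 -> forall k, (k < N)%N -> f k = 0.
Proof.
elim: N => [//|N IH]; rewrite big_ord_recr /= => hsum.
have fN : f N = 0.
  apply: contra_eq (congr1 (fun p : {poly K} => size p) hsum) => fN_neq0 /=.
  rewrite size_poly0 addrC size_polyDl size_scale ?V_size //.
  by rewrite ltnS size_combination.
move: hsum; rewrite fN scale0r addr0 => /IH {}IH k.
by rewrite ltnS leq_eqVlt => /orP[/eqP -> | /IH].
Qed.

Lemma combination_inj (f g : nat -> K) N :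
  \sum_(k < N) f k *: V k = \sum_(k < N) g k *: V k ->
  forall k, (k < N)%N -> f k = g k.
Proof.
move=> eq_fg k lt_kN; apply/eqP; rewrite -subr_eq0; apply/eqP.
apply: (@combination_eq0 (fun k => f k - g k) N) => //.
by under eq_bigr => j _ do rewrite scalerBl; rewrite sumrB eq_fg subrr.
Qed.

Hypothesis V_monic : forall k, V k \is monic.

Lemma size_reduce_top (p : {poly K}) m :
  (size p <= m.+1)%N -> (size (p - p`_m *: V m)%R <= m)%N.
Proof.
move=> szp; apply/leq_sizeP => j; rewrite leq_eqVlt coefB coefZ.
case/orP => [/eqP <- | lt_mj].
  by have := monicP (V_monic m); rewrite lead_coefE V_size => ->; rewrite mulr1 subrr.
rewrite (nth_default _ (leq_trans szp lt_mj)).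
by rewrite (nth_default _ (_ : size (V m) <= j)%N) ?V_size // mulr0 subrr.
Qed.

Lemma expand_in_basis m (p : {poly K}) :
  (size p <= m)%N -> exists f : nat -> K, p = \sum_(k < m) f k *: V k.
Proof.
elim: m p => [|m IH] p szp.
  by exists (fun=> 0); rewrite big_ord0; apply/eqP; rewrite -size_poly_eq0 -leqn0.
have [f pE] := IH _ (size_reduce_top szp).
exists (fun k => if (k < m)%N then f k else p`_m).
rewrite big_ord_recr /= ltnn.
under eq_bigr => k _ do rewrite ltn_ord.
by rewrite -pE subrK.
Qed.

End DegreeBasis.

Section Orthogonality.
Variables (K : fieldType) (u : {poly K} -> K).
Hypothesis u_lin : lin_functional u.

Lemma lin0 : u 0 = 0.
Proof.
have := u_lin 1 0 0; rewrite scale1r addr0 mul1r.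
by move/eqP; rewrite eq_sym -subr_eq0 addrK => /eqP.
Qed.

Lemma linD (p q : {poly K}) : u (p + q) = u p + u q.
Proof. by rewrite -[p]scale1r u_lin mul1r scale1r. Qed.

Lemma linZ (a : K) (p : {poly K}) : u (a *: p) = a * u p.
Proof. by rewrite -[a *: p]addr0 u_lin lin0 addr0. Qed.

Lemma lin_sum (I : Type) (r : seq I) (F : I -> {poly K}) :
  u (\sum_(i <- r) F i) = \sum_(i <- r) u (F i).
Proof. exact: (big_morph u linD lin0). Qed.

Variable P : nat -> {poly K}.
Hypothesis P_smop : is_SMOP u P.

Lemma SMOP_orth_lower m (s : {poly K}) : (size s <= m)%N -> u (P m * s) = 0.
Proof.
have [P_monic [P_size [P_orth _]]] := P_smop.
move=> szs; have [f ->] := expand_in_basis P_size P_monic szs.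
rewrite mulr_sumr lin_sum big1 // => k _.
by rewrite -scalerAr linZ P_orth ?mulr0 // neq_ltn ltn_ord orbT.
Qed.

(* Nondegeneracy: a polynomial of degree < n orthogonal to all polynomials of
   degree < n vanishes; test it against P_d, d = deg r, and use u(P_d^2) != 0. *)
Lemma SMOP_orth_eq0 n (r : {poly K}) : (size r <= n)%N ->
  (forall s : {poly K}, (size s <= n)%N -> u (r * s) = 0) -> r = 0.
Proof.
have [P_monic [P_size [_ P_norm]]] := P_smop.
move=> szr r_orth; apply/eqP; apply: contraT => r_neq0.
have szrE : size r = (size r).-1.+1 by rewrite prednK // size_poly_gt0.
set d := (size r).-1 in szrE.
have r_rest : (size (r - r`_d *: P d)%R <= d)%N.
  by apply: size_reduce_top => //; rewrite szrE.
have : u (r * P d) = r`_d * u (P d * P d).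
  have {1}-> : r = (r - r`_d *: P d) + r`_d *: P d by rewrite subrK.
  rewrite mulrDl linD [(_ - _) * _]mulrC (SMOP_orth_lower r_rest) add0r.
  by rewrite -scalerAl linZ.
rewrite r_orth ?P_size -?szrE // => /esym/eqP; rewrite mulf_eq0 (negbTE (P_norm d)).
by rewrite orbF -lead_coefE lead_coef_eq0 (negbTE r_neq0).
Qed.

End Orthogonality.

Section Wronskian.
Variable K : fieldType.
Implicit Types (p q : {poly K}) (c : K).

Lemma wronskianC p q : wronskian p q = - wronskian q p.
Proof. by rewrite /wronskian; ring. Qed.

Lemma horner_wronskian p q c :
  (wronskian p q).[c] = p.[c] * q^`().[c] - p^`().[c] * q.[c].
Proof. by rewrite /wronskian !hornerE. Qed.

Lemma double_root_factor p c : p.[c] = 0 -> p^`().[c] = 0 ->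
  exists r, p = r * ('X - c%:P) ^+ 2.
Proof.
move=> p_c dp_c; have /factor_theorem [q pE] : root p c by apply/eqP.
move: dp_c; rewrite pE derivM derivXsubC mulr1 !hornerE subrr mulr0 add0r.
move=> q_c; have /factor_theorem [r qE] : root q c by apply/eqP.
by exists r; rewrite qE -mulrA -expr2.
Qed.

Lemma singular_system (x y x' y' : K) : x * y' - x' * y = 0 ->
  exists a b, (a != 0 \/ b != 0) /\ a * x + b * y = 0 /\ a * x' + b * y' = 0.
Proof.
move=> det0.
have [xy_neq0 | ] := boolP ((y != 0) || (x != 0)).
  exists y, (- x); split; first by case/orP: xy_neq0; [left | right; rewrite oppr_eq0].
  by split; [ring | rewrite -[RHS]oppr0 -det0; ring].
rewrite negb_or !negbK => /andP[/eqP y0 /eqP x0].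
have [xy'_neq0 | ] := boolP ((y' != 0) || (x' != 0)).
  exists y', (- x'); split; first by case/orP: xy'_neq0; [left | right; rewrite oppr_eq0].
  by rewrite x0 y0; split; ring.
rewrite negb_or !negbK => /andP[/eqP y'0 /eqP x'0].
by exists 1, 0; rewrite x0 x'0 y0 y'0; split; [left; exact: oner_neq0 | split; ring].
Qed.

(* If W(Q_(n+1), Q_n)(c) = 0, some p = a Q_(n+1) + b Q_n, (a, b) != 0, has a
   double root at c: p = (x - c)^2 r with deg r <= n.  Then
   u(r s) = uh(p s) = 0 for deg s < n, so r = 0 by nondegeneracy of u, and
   p = 0 contradicts the independence of Q_(n+1) and Q_n. *)
Lemma wronskian_neq0 (u uh : {poly K} -> K) (P Q : nat -> {poly K}) c n :
  lin_functional u -> lin_functional uh ->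
  (forall p, u p = uh (('X - c%:P) ^+ 2 * p)) ->
  is_SMOP u P -> is_SMOP uh Q -> (wronskian (Q n.+1) (Q n)).[c] != 0.
Proof.
move=> u_lin uh_lin u_uh P_smop Q_smop; have [Q_monic [Q_size _]] := Q_smop.
apply/negP => /eqP; rewrite horner_wronskian => /singular_system.
move=> [a [b [ab_neq0 [p_c dp_c]]]].
pose p := a *: Q n.+1 + b *: Q n.
have [r pE] : exists r, p = r * ('X - c%:P) ^+ 2.
  by apply: double_root_factor; rewrite /p ?derivE !hornerE.
have r0 : r = 0.
  apply: (SMOP_orth_eq0 u_lin P_smop (n := n)).
    have [-> | r_neq0] := eqVneq r 0; first by rewrite size_poly0.
    have : (size p <= n.+2)%N.
      apply: leq_trans (size_polyD _ _) _.
      by rewrite geq_max !(leq_trans (size_scale_leq _ _)) ?Q_size.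
    rewrite pE size_Mmonic ?monic_exp ?monicXsubC // size_exp_XsubC /=.
    by rewrite addn3.
  move=> s szs; rewrite u_uh mulrA (mulrC _ r) -pE /p mulrDl linD //.
  rewrite -!scalerAl !linZ // !(SMOP_orth_lower uh_lin Q_smop) ?mulr0 ?addr0 //.
  exact: leqW.
have lead_Q : (Q n.+1)`_n.+1 = 1.
  by have := monicP (Q_monic n.+1); rewrite lead_coefE Q_size.
have a0 : a = 0.
  have := congr1 (fun q : {poly K} => q`_n.+1) pE.
  by rewrite /= r0 mul0r coef0 coefD !coefZ lead_Q nth_default ?Q_size // mulr1 mulr0 addr0.
have b0 : b = 0.
  move: pE; rewrite /p a0 r0 scale0r add0r mul0r => /eqP.
  by rewrite scaler_eq0 -size_poly_eq0 Q_size orbF => /eqP.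
by case: ab_neq0; rewrite ?a0 ?b0 eqxx.
Qed.

End Wronskian.

Section Beta.
Variable K : fieldType.

Lemma cramer2 (q0 q1 q2 d0 d1 d2 b0 b1 : K) :
  q2 + b1 * q1 + b0 * q0 = 0 -> d2 + b1 * d1 + b0 * d0 = 0 ->
  q0 * d1 - d0 * q1 != 0 ->
  b0 = (q1 * d2 - d1 * q2) / (q0 * d1 - d0 * q1) /\
  b1 = - ((q0 * d2 - d0 * q2) / (q0 * d1 - d0 * q1)).
Proof.
move=> eq_q eq_d det_neq0.
have -> : q2 = - (b1 * q1 + b0 * q0) by rewrite -[LHS]subr0 -eq_q; ring.
have -> : d2 = - (b1 * d1 + b0 * d0) by rewrite -[LHS]subr0 -eq_d; ring.
split.
  rewrite (_ : _ * _ - _ = b0 * (q0 * d1 - d0 * q1)) ?mulfK //; ring.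
by rewrite (_ : _ * _ - _ = - (b1 * (q0 * d1 - d0 * q1))) ?mulNr ?mulfK ?opprK //; ring.
Qed.

(* Evaluating (x - c)^2 p = q2 + b1 q1 + b0 q0 and its derivative at c gives
   a linear system for (b0, b1) whose determinant is W(q0, q1)(c). *)
Lemma beta_formulas (p q0 q1 q2 : {poly K}) (c b0 b1 : K) :
  ('X - c%:P) ^+ 2 * p = q2 + b1 *: q1 + b0 *: q0 ->
  (wronskian q1 q0).[c] != 0 ->
  b0 = (wronskian q1 q2).[c] / (wronskian q0 q1).[c] /\
  b1 = - ((wronskian q0 q2).[c] / (wronskian q0 q1).[c]).
Proof.
move=> pE w_neq0; rewrite !horner_wronskian.
apply: cramer2.
- have := congr1 (horner^~ c) pE.
  by rewrite /= expr2 !hornerE subrr !mul0r => <-.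
- have := congr1 (fun q => q^`().[c]) pE.
  rewrite /= expr2 -mulrA derivM derivXsubC mul1r !derivE !hornerE subrr.
  by rewrite !mul0r addr0 => <-.
- by rewrite -horner_wronskian wronskianC hornerN oppr_eq0.
Qed.

End Beta.

Section RowExpansions.
Variable K : fieldType.
Implicit Types (A B : smat K) (V W T : nat -> {poly K}).

(* Row i of A expresses T_i in the family (W_k), using only k < i + w. *)
Definition expands A W T (w : nat) : Prop :=
  forall i N, (i + w <= N)%N -> \sum_(k < N) A i k *: W k = T i.

Definition band_mul A B (w : nat) : smat K :=
  fun i j => \sum_(k < i + w) A i k * B k j.

Lemma expands_band A W T w : (forall k, W k != 0) -> expands A W T w ->
  forall i k, (i + w <= k)%N -> A i k = 0.
Proof.
move=> W_neq0 AWT i k le_k; have := AWT i k.+1 (leqW le_k).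
rewrite big_ord_recr /= AWT // => /eqP; rewrite -subr_eq0 addrAC subrr add0r.
by rewrite scaler_eq0 (negbTE (W_neq0 k)) orbF => /eqP.
Qed.

Lemma band_mul_prod A B W T w : (forall k, W k != 0) -> expands A W T w ->
  smat_prod A B (band_mul A B w).
Proof.
move=> W_neq0 AWT i j; exists (i + w) => N le_N.
by rewrite (sum_trunc (F := fun k => A i k * B k j) le_N) // => k le_k; rewrite (expands_band W_neq0 AWT) ?mul0r.
Qed.

Lemma expands_mul A B V W T w1 w2 : expands A W T w1 -> expands B V W w2 ->
  expands (band_mul A B w1) V T (w1 + w2).
Proof.
move=> AWT BVW i N le_N; rewrite -(AWT i (i + w1)) //.
under eq_bigr => j _ do rewrite scaler_suml.
rewrite exchange_big /=; apply: eq_bigr => k _.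
rewrite -(BVW k N) ?scaler_sumr; last by have lt_k := ltn_ord k; lia.
by apply: eq_bigr => j _; rewrite scalerA.
Qed.

Lemma expands_unique A B V T w w' : (forall k, size (V k) = k.+1) ->
  expands A V T w -> expands B V T w' -> forall i j, A i j = B i j.
Proof.
move=> V_size AVT BVT i j; pose N := (i + w + w' + j).+1.
apply: (combination_inj V_size (N := N)); last by rewrite /N; lia.
by rewrite AVT ?BVT //; rewrite /N; lia.
Qed.

Lemma expands_mull A W T w (p : {poly K}) : expands A W T w ->
  expands A (fun k => p * W k) (fun i => p * T i) w.
Proof.
move=> AWT i N le_N; rewrite -(AWT i N le_N) mulr_sumr.
by apply: eq_bigr => k _; rewrite scalerAr.
Qed.

Lemma same_product A1 B1 A2 B2 V W1 W2 T w1 w2 w3 w4 :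
  (forall k, size (V k) = k.+1) ->
  (forall k, W1 k != 0) -> (forall k, W2 k != 0) ->
  expands A1 W1 T w1 -> expands B1 V W1 w2 ->
  expands A2 W2 T w3 -> expands B2 V W2 w4 ->
  exists M, smat_prod A1 B1 M /\ smat_prod A2 B2 M.
Proof.
move=> V_size W1_neq0 W2_neq0 AWT1 BVW1 AWT2 BVW2.
exists (band_mul A1 B1 w1); split; first exact: band_mul_prod AWT1.
have sameM := expands_unique V_size (expands_mul AWT1 BVW1) (expands_mul AWT2 BVW2).
move=> i j; have [N prodN] := band_mul_prod B2 W2_neq0 AWT2 i j.
by exists N => N' le_N'; rewrite sameM prodN.
Qed.

End RowExpansions.

Ltac eval_index_tests :=
  repeat match goal with |- context [(?x == ?y :> nat)] =>
    first [ rewrite (_ : (x == y) = true); last by lia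
          | rewrite (_ : (x == y) = false); last by lia ] end; rewrite /=.

Section Factorizations.
Variables (K : fieldType) (c : K).

Lemma jacobi_expands P (J : smat K) : monic_jacobi P J ->
  expands (smat_subc J c) P (fun i => ('X - c%:P) * P i) 2.
Proof.
move=> [a [b [rec JE]]] i N le_N.
rewrite (sum_trunc (F := fun k => smat_subc J c i k *: P k) le_N); last first.
  by move=> k le_k; rewrite /smat_subc JE; eval_index_tests; rewrite subr0 scale0r.
rewrite mulrBl rec addn2; case: i {le_N} => [|i].
  rewrite !big_ord_recr big_ord0 /= /smat_subc !JE; eval_index_tests.
  by rewrite -!mul_polyC !polyCB; ring.
rewrite !big_ord_recr /= big1 => [|k _]; last first.
  by have lt_k := ltn_ord k; rewrite /smat_subc JE; eval_index_tests; rewrite subr0 scale0r.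
rewrite /smat_subc !JE; eval_index_tests.
by rewrite -!mul_polyC !polyCB; ring.
Qed.

Lemma jacobi_sq_expands P (J : smat K) : monic_jacobi P J ->
  expands (smat_subc J c) (fun k => ('X - c%:P) * P k)
          (fun i => ('X - c%:P) ^+ 2 * P i) 2.
Proof.
move=> PJ i N le_N; rewrite expr2 -mulrA.
exact: (expands_mull ('X - c%:P) (jacobi_expands PJ)).
Qed.

Lemma Lmat_expands P Q (al1 al2 : nat -> K) : P 0%N = 1 -> Q 0%N = 1 ->
  (forall n, Q n.+1 = P n.+1 + al1 n.+1 *: P n
                      + (if n is m.+1 then al2 n.+1 *: P m else 0)) ->
  expands (Lmat al1 al2) P Q 1.
Proof.
move=> P0 Q0 QE i N le_N.
rewrite (sum_trunc (F := fun k => Lmat al1 al2 i k *: P k) le_N); last first.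
  by move=> k le_k; rewrite /Lmat; eval_index_tests; rewrite scale0r.
rewrite addn1; case: i {le_N} => [|[|i]].
- by rewrite big_ord_recr big_ord0 /= /Lmat /= scale1r add0r P0 Q0.
- by rewrite !big_ord_recr big_ord0 /= /Lmat /= QE addr0 scale1r add0r addrC.
rewrite !big_ord_recr /= big1 => [|k _]; last first.
  by have lt_k := ltn_ord k; rewrite /Lmat; eval_index_tests; rewrite scale0r.
by rewrite /Lmat; eval_index_tests; rewrite QE -!mul_polyC; ring.
Qed.

Lemma Umat_expands P Q (be0 be1 : nat -> K) :
  (forall n, ('X - c%:P) ^+ 2 * P n = Q n.+2 + be1 n *: Q n.+1 + be0 n *: Q n) ->
  expands (Umat be0 be1) Q (fun i => ('X - c%:P) ^+ 2 * P i) 3.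
Proof.
move=> PE i N le_N.
rewrite (sum_trunc (F := fun k => Umat be0 be1 i k *: Q k) le_N); last first.
  by move=> k le_k; rewrite /Umat; eval_index_tests; rewrite scale0r.
rewrite addn3 !big_ord_recr /= big1 => [|k _]; last first.
  by have lt_k := ltn_ord k; rewrite /Umat; eval_index_tests; rewrite scale0r.
by rewrite /Umat; eval_index_tests; rewrite PE -!mul_polyC; ring.
Qed.

End Factorizations.

Lemma monic_size1 (K : fieldType) (p : {poly K}) :
  p \is monic -> size p = 1%N -> p = 1.
Proof.
move=> p_monic szp; rewrite (size1_polyC (eq_leq szp)).
by have := monicP p_monic; rewrite lead_coefE szp => ->.
Qed.

(* al1 n = alpha_{n,n-1}, al2 n = alpha_{n,n-2};
   be0 n = beta_{n,n},   be1 n = beta_{n,n+1}. *)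
Theorem mainTheorem5 (R : realType) (c : R[i])
  (u uh : {poly R[i]} -> R[i]) (P Q : nat -> {poly R[i]})
  (J Jh : smat R[i]) (al1 al2 be0 be1 : nat -> R[i]) :
  lin_functional u -> lin_functional uh ->
  quasi_definite u -> quasi_definite uh ->
  (forall p, u p = uh (('X - c%:P) ^+ 2 * p)) ->
  is_SMOP u P -> is_SMOP uh Q ->
  monic_jacobi P J -> monic_jacobi Q Jh ->
  (forall n, Q n.+1 = P n.+1 + al1 n.+1 *: P n
                      + (if n is m.+1 then al2 n.+1 *: P m else 0)) ->
  (forall n, ('X - c%:P) ^+ 2 * P n = Q n.+2 + be1 n *: Q n.+1 + be0 n *: Q n) ->
  (forall n, (wronskian (Q n.+1) (Q n)).[c] != 0) /\
  (forall n, be0 n = (wronskian (Q n.+1) (Q n.+2)).[c] / (wronskian (Q n) (Q n.+1)).[c]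
             /\ be0 n != 0) /\
  (forall n, be1 n = - ((wronskian (Q n) (Q n.+2)).[c] / (wronskian (Q n) (Q n.+1)).[c])) /\
  (exists M, smat_prod (smat_subc J c) (smat_subc J c) M
             /\ smat_prod (Umat be0 be1) (Lmat al1 al2) M) /\
  (exists M, smat_prod (smat_subc Jh c) (smat_subc Jh c) M
             /\ smat_prod (Lmat al1 al2) (Umat be0 be1) M).
Proof.
move=> u_lin uh_lin _ _ u_uh P_smop Q_smop PJ QJh QE PE.
have W_neq0 n := wronskian_neq0 n u_lin uh_lin u_uh P_smop Q_smop.
have beta n := beta_formulas (PE n) (W_neq0 n).
have [P_monic [P_size _]] := P_smop; have [Q_monic [Q_size _]] := Q_smop.
have nonzero (V : nat -> {poly R[i]}) m k : size (V k) = k.+1 -> ('X - c%:P) ^+ m * V k != 0.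
  by move=> szV; rewrite mulf_neq0 ?expf_neq0 ?polyXsubC_eq0 // -size_poly_gt0 szV.
have L_exp : expands (Lmat al1 al2) P Q 1.
  by apply: Lmat_expands QE; apply: monic_size1.
split=> //; split=> [n|]; last split=> [n|]; last split.
- split; first by case: (beta n).
  by rewrite (beta n).1 mulf_neq0 ?invr_eq0 // wronskianC hornerN oppr_eq0.
- by case: (beta n).
- apply: (same_product (V := P)) (jacobi_sq_expands c PJ) (jacobi_expands c PJ)
    (Umat_expands PE) L_exp => // k; first exact: (nonzero _ 1%N).
  by rewrite -size_poly_gt0 Q_size.
- apply: (same_product (V := Q)) (jacobi_sq_expands c QJh) (jacobi_expands c QJh)
    (expands_mull _ L_exp) (Umat_expands PE) => // k; first exact: (nonzero _ 1%N).
  exact: (nonzero _ 2%N).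
Qed.
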